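(* Let $n\ge1$, $K=2n$, and let $x_1,\dots,x_n,y_1,\dots,y_n\in\mathbb{R}$. Define $m_k=\sum_{j=1}^n x_j^k-\sum_{j=1}^n y_j^k$ for $k=1,\dots,K$, and $\tilde m=(0,m_1,\dots,m_K)^T\in\mathbb{R}^{K+1}$. Write $$p(x)=(x-x_1)\cdots(x-x_n)=c_0+c_1x+\dots+c_nx^n,\qquad q(x)=(x-y_1)\cdots(x-y_n)=d_0+d_1x+\dots+d_nx^n$$ (so $c_n=d_n=1$), and set $\mathbf{c}=(c_n,c_{n-1},\dots,c_0,0,\dots,0)^T\in\mathbb{R}^{K+1}$ and $\mathbf{d}=(d_n,d_{n-1},\dots,d_0,0,\dots,0)^T\in\mathbb{R}^{K+1}$ (padded with $n$ zeros). Let $\tilde a,\tilde b\in\mathbb{R}^{K+1}$ be the vectors with first entry $1$ satisfying $\mathcal{T}(\tilde m)\tilde a=\Lambda\tilde a$ and $\mathcal{T}(\tilde m)\tilde b=-\Lambda\tilde b$. Then $$\mathcal{T}(\tilde a)\mathbf{c}=\mathbf{d},\qquad \mathcal{T}(\tilde b)\mathbf{d}=\mathbf{c}.$$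
   Context: For $\mathbf{x}=(x_1,\dots,x_N)^T\in\mathbb{R}^N$, $\mathcal{T}(\mathbf{x})$ denotes the $N\times N$ lower triangular Toeplitz matrix whose first column is $\mathbf{x}$, i.e. $\mathcal{T}(\mathbf{x})_{ij}=x_{i-j+1}$ for $i\ge j$ and $0$ for $i<j$. Here $N=K+1$ and $\Lambda=\mathrm{diag}(0,1,2,\dots,K)$. (The conditions on $\tilde a,\tilde b$ are lower triangular systems that determine them uniquely given first entry $1$.) *)

From HB Require Import structures.
From mathcomp Require Import all_boot all_order all_algebra.
Set Implicit Arguments. Unset Strict Implicit. Unset Printing Implicit Defensive.
Import Order.TTheory GRing.Theory Num.Theory.
Local Open Scope ring_scope.

Definition toeplitz {R : nzRingType} {k : nat} (v : 'cV[R]_k.+1) : 'M[R]_k.+1 :=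
  \matrix_(i, j) if (j <= i)%N then v (inord (i - j)) 0 else 0.

Definition Lambda {R : nzRingType} (k : nat) : 'M[R]_k.+1 :=
  diag_mx (\row_(i < k.+1) (i : nat)%:R).

Definition mom {R : nzRingType} {n : nat} (x y : 'I_n -> R) (k : nat) : R :=
  \sum_(j < n) x j ^+ k - \sum_(j < n) y j ^+ k.

Definition mtilde {R : nzRingType} {n : nat} (x y : 'I_n -> R) : 'cV[R]_(n.*2.+1) :=
  \col_(i < n.*2.+1) (if (i : nat) == 0%N then 0 else mom x y i).

Definition rootpoly {R : nzRingType} {n : nat} (x : 'I_n -> R) : {poly R} :=
  \prod_(j < n) ('X - (x j)%:P).

Definition coefvec {R : nzRingType} (n : nat) (p : {poly R}) : 'cV[R]_(n.*2.+1) :=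
  \col_(i < n.*2.+1) (if (i <= n)%N then p`_(n - i) else 0).


From HB Require Import structures.
From mathcomp Require Import all_boot all_order all_algebra.
Import Order.TTheory GRing.Theory Num.Theory.
Set Implicit Arguments. Unset Strict Implicit. Unset Printing Implicit Defensive.
Local Open Scope ring_scope.

(* Read a vector v of length K+1 as the truncated series V = sum_i v_i X^i.
   Then T(v) w is the product V W and Lambda v is theta V (theta = X d/dX)
   modulo X^(K+1); the padded reversed coefficient vector of
   prod_j (X - x_j) is E_x = prod_j (1 - x_j X), and tilde m is G_x - G_y
   with G_x = sum_j sum_(k >= 1) x_j^k X^k.  Newton's identity reads
   theta E_x = - G_x E_x.  If theta A = (G_x - G_y) A, Leibniz' rule gives
   theta (A E_x) = - G_y (A E_x), the equation solved by E_y; both series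
   start with 1 and in characteristic zero this equation has a unique such
   solution, so A E_x = E_y, i.e. T(a) c = d.  The second identity is the
   first with x and y exchanged, since this exchange negates tilde m. *)

Definition eq_upto (R : nzRingType) (K : nat) (p q : {poly R}) : Prop :=
  forall i, (i <= K)%N -> p`_i = q`_i.

Section TruncatedEquality.
Variables (R : nzRingType) (K : nat).
Implicit Types p q r s : {poly R}.

(* Truncated equality is a congruence for the ring operations, since the
   low-degree coefficients of a product only involve low-degree coefficients. *)
Lemma eq_upto_add p q r s :
  eq_upto K p q -> eq_upto K r s -> eq_upto K (p + r) (q + s).
Proof. by move=> hpq hrs i hi; rewrite !coefD hpq ?hrs. Qed.

Lemma eq_upto_mulr p q r : eq_upto K p q -> eq_upto K (p * r) (q * r).
Proof.
move=> hpq i hi; rewrite !coefM; apply: eq_bigr => j _.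
by rewrite hpq // (leq_trans (leq_ord j) hi).
Qed.

Lemma eq_upto_mull p q r : eq_upto K p q -> eq_upto K (r * p) (r * q).
Proof.
move=> hpq i hi; rewrite !coefMr; apply: eq_bigr => j _.
by rewrite hpq // (leq_trans (leq_ord j) hi).
Qed.

End TruncatedEquality.

Definition euler (R : nzRingType) (p : {poly R}) : {poly R} := 'X * p^`().

Lemma coef_euler (R : nzRingType) (p : {poly R}) (i : nat) :
  (euler p)`_i = p`_i *+ i.
Proof. by rewrite /euler coefXM; case: i => [|i] //=; rewrite coef_deriv. Qed.

Lemma eulerM (R : comNzRingType) (p q : {poly R}) :
  euler (p * q) = euler p * q + p * euler q.
Proof. by rewrite /euler derivM mulrDr !mulrA [p * 'X]mulrC. Qed.

(* Uniqueness for theta V = - S V modulo X^(K+1) when S has no constant term: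
   comparing coefficients of X^(i+1) gives (i+1) V_(i+1) in terms of
   V_0, ..., V_i, so in characteristic zero V is determined by V_0. *)
Lemma euler_ode_uniq (R : numDomainType) (K : nat) (S V W : {poly R}) :
  S`_0 = 0 -> V`_0 = W`_0 ->
  eq_upto K (euler V) (- (S * V)) -> eq_upto K (euler W) (- (S * W)) ->
  eq_upto K V W.
Proof.
move=> S0 VW0 hV hW.
suff low_eq i : (i <= K)%N -> forall j, (j <= i)%N -> V`_j = W`_j.
  by move=> i hi; apply: (low_eq i hi).
elim: i => [|i IH] hi j; first by rewrite leqn0 => /eqP ->.
rewrite leq_eqVlt => /orP [/eqP ->|hj]; last exact: IH (ltnW hi) _ hj.
have SV_SW : (S * V)`_i.+1 = (S * W)`_i.+1.
  rewrite !coefM big_ord_recl [in RHS]big_ord_recl S0 !mul0r !add0r.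
  by apply: eq_bigr => k _; rewrite IH ?(ltnW hi) // lift0 subSS leq_subr.
have := hV i.+1 hi; have := hW i.+1 hi; rewrite !coef_euler !coefN SV_SW => <-.
by move/eqP; rewrite eqrMn2r => /eqP.
Qed.

(* Integrating factor: if theta A = (S1 - S2) A and P1, P2 solve
   theta Pk = - Sk Pk, then A P1 solves the equation of P2; with matching
   constant terms, A P1 = P2 modulo X^(K+1). *)
Lemma integrating_factor (R : numDomainType) (K : nat) (A S1 S2 P1 P2 : {poly R}) :
  eq_upto K (euler A) ((S1 - S2) * A) ->
  eq_upto K (euler P1) (- (S1 * P1)) -> eq_upto K (euler P2) (- (S2 * P2)) ->
  S2`_0 = 0 -> A`_0 = 1 -> P1`_0 = 1 -> P2`_0 = 1 -> eq_upto K (A * P1) P2.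
Proof.
move=> hA h1 h2 S20 A0 P10 P20.
apply: (euler_ode_uniq S20) => //; first by rewrite coef0M A0 P10 P20 mulr1.
have -> : - (S2 * (A * P1)) = (S1 - S2) * A * P1 + A * - (S1 * P1).
  by rewrite !mulrBl mulrN -!mulrA [A * (S1 * P1)]mulrCA addrAC subrr add0r.
by rewrite eulerM; apply: eq_upto_add; [apply: eq_upto_mulr | apply: eq_upto_mull].
Qed.

(* The factor 1 - z X, and the truncated geometric series
   G_z = z X + z^2 X^2 + ... + z^K X^K, its logarithmic derivative. *)
Definition rfactor (R : nzRingType) (z : R) : {poly R} := 1 - z *: 'X.

Definition geom (R : nzRingType) (K : nat) (z : R) : {poly R} :=
  \poly_(k < K.+1) (if k == 0%N then 0 else z ^+ k).

Lemma geom_coef0 (R : nzRingType) (K : nat) (z : R) : (geom K z)`_0 = 0.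
Proof. by rewrite coef_poly. Qed.

Lemma euler_rfactor (R : comNzRingType) (K : nat) (z : R) :
  eq_upto K (euler (rfactor z)) (- (geom K z * rfactor z)).
Proof.
move=> i hi; rewrite coef_euler /rfactor mulrBr mulr1 -scalerAr.
rewrite !coefN !coefB !coefZ coefMX coef1 coefX !coef_poly.
case: i hi => [|[|k]] hi /=.
- by rewrite mulr0n !mulr0 subrr oppr0.
- by rewrite ltnS hi !mulr0 mulr1 sub0r subr0 expr1 mulr1n.
- by rewrite !ltnS hi (ltnW hi) mulr0 subr0 mul0rn exprS subrr oppr0.
Qed.

Lemma euler_prod_rfactor (R : comNzRingType) (K : nat) (I : Type)
    (r : seq I) (z : I -> R) :
  eq_upto K (euler (\prod_(j <- r) rfactor (z j)))
    (- ((\sum_(j <- r) geom K (z j)) * \prod_(j <- r) rfactor (z j))).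
Proof.
elim: r => [|j0 r IH].
  by move=> i _; rewrite !big_nil /euler derivC mulr0 mul0r oppr0.
rewrite !big_cons eulerM.
set E := rfactor (z j0); set P := \prod_(j <- r) _; set S := \sum_(j <- r) _.
have -> : - ((geom K (z j0) + S) * (E * P)) =
          - (geom K (z j0) * E) * P + E * - (S * P).
  by rewrite mulrDl mulrA [S * _]mulrCA opprD mulNr mulrN.
apply: eq_upto_add; first exact/eq_upto_mulr/euler_rfactor.
exact: eq_upto_mull.
Qed.

Lemma coef_prod_rfactor (R : comNzRingType) (I : Type) (r : seq I)
    (z : I -> R) (i : nat) :
  (\prod_(j <- r) rfactor (z j))`_i =
  if (i <= size r)%N then (\prod_(j <- r) ('X - (z j)%:P))`_(size r - i) else 0.
Proof.
elim: r i => [|j0 r IH] i; first by case: i => [|i]; rewrite !big_nil !coef1.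
set p := \prod_(j <- r) ('X - (z j)%:P).
have p_high k : (size r < k)%N -> p`_k = 0.
  by move=> hk; apply: nth_default; rewrite size_prod_XsubC.
rewrite !big_cons /rfactor mulrBl mul1r -scalerAl coefB coefZ coefXM -/p.
rewrite mulrBl coefB coefXM coefCM /=.
case: i => [|i]; first by rewrite IH subn0 /= (p_high (size r).+1) // mulr0 subr0.
rewrite /= !IH ltnS; case: (ltngtP i (size r)) => hi.
- have /negbTE i_low : (size r - i != 0)%N by rewrite subn_eq0 -ltnNge.
  by rewrite -/p subSS subnS i_low.
- by rewrite mulr0 subrr.
- by rewrite -/p hi subSS subnn /= sub0r.
Qed.

Lemma prod_rfactor_coef0 (R : comNzRingType) (I : Type) (r : seq I) (z : I -> R) :
  (\prod_(j <- r) rfactor (z j))`_0 = 1.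
Proof.
rewrite -horner_coef0 horner_prod big1 // => j _.
by rewrite /rfactor hornerD hornerN hornerZ hornerX hornerC mulr0 subr0.
Qed.

Definition poly_of_col (R : nzRingType) (K : nat) (v : 'cV[R]_K.+1) : {poly R} :=
  \poly_(i < K.+1) v (inord i) 0.

Lemma coef_poly_of_col (R : nzRingType) (K : nat) (v : 'cV[R]_K.+1) (i : nat) :
  (i <= K)%N -> (poly_of_col v)`_i = v (inord i) 0.
Proof. by move=> hi; rewrite coef_poly ltnS hi. Qed.

Lemma toeplitz_mulmx (R : nzRingType) (K : nat) (v w : 'cV[R]_K.+1) (i : nat) :
  (i <= K)%N -> (toeplitz v *m w) (inord i) 0 = (poly_of_col v * poly_of_col w)`_i.
Proof.
move=> hi; have hi' : (i.+1 <= K.+1)%N by rewrite ltnS.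
rewrite mxE coefMr (big_ord_widen _
  (fun j => (poly_of_col v)`_(i - j) * (poly_of_col w)`_j) hi') [RHS]big_mkcond.
apply: eq_bigr => j _; rewrite /toeplitz mxE inordK // ltnS.
case: ifP => hj; last by rewrite mul0r.
by rewrite !coef_poly ltn_ord (leq_ltn_trans (leq_subr j i) hi') inord_val.
Qed.

Lemma Lambda_mulmx (R : nzRingType) (K : nat) (v : 'cV[R]_K.+1) (i : nat) :
  (i <= K)%N -> (Lambda K *m v) (inord i) 0 = (euler (poly_of_col v))`_i.
Proof.
move=> hi; rewrite /Lambda mul_diag_mx !mxE inordK ?ltnS //.
by rewrite coef_euler coef_poly_of_col // mulr_natl.
Qed.

Lemma toeplitzN (R : nzRingType) (K : nat) (v : 'cV[R]_K.+1) :
  toeplitz (- v) = - toeplitz v.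
Proof.
by apply/matrixP => i j; rewrite !mxE; case: ifP => _; rewrite ?mxE ?oppr0.
Qed.

Lemma mtilde_swap (R : nzRingType) (n : nat) (x y : 'I_n -> R) :
  mtilde y x = - mtilde x y.
Proof.
by apply/matrixP => i j; rewrite !mxE; case: eqP => _; rewrite ?oppr0 // /mom opprB.
Qed.

Lemma size_index_enum_ord (n : nat) : size (index_enum 'I_n) = n.
Proof. by rewrite -[index_enum _]filter_predT -cardE card_ord. Qed.

Lemma coefvec_rootpoly (R : comNzRingType) (n : nat) (x : 'I_n -> R) :
  eq_upto n.*2 (poly_of_col (coefvec n (rootpoly x)))
    (\prod_(j <- index_enum 'I_n) rfactor (x j)).
Proof.
move=> i hi; rewrite coef_poly_of_col // coef_prod_rfactor size_index_enum_ord.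
by rewrite /coefvec mxE inordK ?ltnS.
Qed.

Lemma mtilde_series (R : nzRingType) (n : nat) (x y : 'I_n -> R) :
  eq_upto n.*2 (poly_of_col (mtilde x y))
    (\sum_(j <- index_enum 'I_n) geom n.*2 (x j)
     - \sum_(j <- index_enum 'I_n) geom n.*2 (y j)).
Proof.
move=> i hi; rewrite coef_poly_of_col // /mtilde mxE inordK ?ltnS //.
rewrite coefB !coef_sum; case: eqP => [->|/eqP i0].
  by rewrite !big1 ?subrr // => j _; rewrite geom_coef0.
by congr (_ - _); apply: eq_bigr => j _; rewrite coef_poly ltnS hi (negbTE i0).
Qed.

Lemma toeplitz_sol_coefvec (R : numDomainType) (n : nat) (x y : 'I_n -> R)
    (a : 'cV[R]_(n.*2.+1)) :
  a 0 0 = 1 -> toeplitz (mtilde x y) *m a = Lambda (n.*2) *m a ->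
  toeplitz a *m coefvec n (rootpoly x) = coefvec n (rootpoly y).
Proof.
move=> a0 Ha; set K := n.*2.
set Ex := \prod_(j <- index_enum 'I_n) rfactor (x j).
set Ey := \prod_(j <- index_enum 'I_n) rfactor (y j).
have ord0E : inord 0 = 0 :> 'I_K.+1 by apply: val_inj; rewrite /= inordK.
have ode_a : eq_upto K (euler (poly_of_col a))
    ((\sum_(j <- index_enum 'I_n) geom K (x j)
      - \sum_(j <- index_enum 'I_n) geom K (y j)) * poly_of_col a).
  move=> i hi; rewrite -Lambda_mulmx // -Ha toeplitz_mulmx //.
  exact: (eq_upto_mulr _ (mtilde_series x y)).
have AEx_Ey : eq_upto K (poly_of_col a * Ex) Ey.
  apply: (integrating_factor ode_a).
  - exact: euler_prod_rfactor.
  - exact: euler_prod_rfactor.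
  - by rewrite coef_sum big1 // => j _; rewrite geom_coef0.
  - by rewrite coef_poly_of_col // ord0E.
  - exact: prod_rfactor_coef0.
  - exact: prod_rfactor_coef0.
apply/matrixP => i j; rewrite (ord1 j) -(inord_val i).
have hi : (i <= K)%N by rewrite -ltnS.
rewrite toeplitz_mulmx // (eq_upto_mull _ (coefvec_rootpoly x)) // AEx_Ey //.
by rewrite -coefvec_rootpoly // coef_poly_of_col.
Qed.

Theorem lemma3 (R : realFieldType) (n : nat) (hn : (1 <= n)%N)
  (x y : 'I_n -> R) (a b : 'cV[R]_(n.*2.+1)) :
  a 0 0 = 1 -> toeplitz (mtilde x y) *m a = Lambda (n.*2) *m a ->
  b 0 0 = 1 -> toeplitz (mtilde x y) *m b = - (Lambda (n.*2) *m b) ->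
  toeplitz a *m coefvec n (rootpoly x) = coefvec n (rootpoly y) /\
  toeplitz b *m coefvec n (rootpoly y) = coefvec n (rootpoly x).
Proof.
move=> a0 Ha b0 Hb; split; first exact: toeplitz_sol_coefvec.
apply: toeplitz_sol_coefvec => //.
by rewrite mtilde_swap toeplitzN mulNmx Hb opprK.
Qed.
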